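(* Algorithm 1 is monotonic. Moreover, for a connected graph $G$ with $n\ge2$ nodes, diameter $D$, nonnegative real loads with initial discrepancy $K>0$, and any $\epsilon>0$, after at most $(2nD+1)\ln(\lceil 2nK^2/\epsilon^2\rceil)$ rounds (hence $O(nD\log(nK/\epsilon))$ time, each round taking a constant number of communication steps; the paper states the bound $(6n+3)D\ln(\lceil nK^2/(\epsilon^2/2)\rceil)$ time units) the discrepancy of $G$ is at most $\epsilon$, and it remains at most $\epsilon$ thereafter.
   Context: $G=(V,E)$ is an undirected connected graph, $n=|V|$, $D$ its diameter; each node $u$ holds a load $load(u)\ge 0$ (real). $L_{max},L_{min}$ denote the current maximum and minimum load and the discrepancy is $K=L_{max}-L_{min}$. Algorithm 1 (single proposal, continuous) proceeds in synchronous rounds; in each round, using the loads at the start of the round: (1) every node $u$ having at least one neighbor with strictly smaller load picks a neighbor $v$ maximizing $load(u)-load(v)$ (ties broken arbitrarily) and sends $v$ a proposal of value $p_{uv}=(load(u)-load(v))/2$; (2) every node that received at least one proposal accepts exactly one proposal of maximum value (ties arbitrary); (3) all accepted transfers are executed simultaneously (each accepted proposal $p_{wu}$ moves $p_{wu}$ from $w$ to $u$), and nodes report their new loads to neighbors. An algorithm is monotonic if in every execution (a) each load transfer goes from a higher-loaded node to a less-loaded one, and (b) the maximum load never increases and the minimum load never decreases. *)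

From HB Require Import structures.
From mathcomp Require Import all_boot all_order all_algebra.
From mathcomp Require Import all_classical all_reals all_analysis.
Set Implicit Arguments. Unset Strict Implicit. Unset Printing Implicit Defensive.
Import Order.TTheory GRing.Theory Num.Theory.
Local Open Scope ring_scope.

Section Defs.
Variables (R : realType) (V : finType) (e : rel V).

Definition dist_le (u v : V) (k : nat) : Prop :=
  exists p : seq V, [&& path e u p, last u p == v & (size p <= k)%N].

Definition is_diameter (D : nat) : Prop :=
  (forall u v, dist_le u v D) /\
  (forall D', (forall u v, dist_le u v D') -> (D <= D')%N).

(* discrepancy K = Lmax - Lmin = max over pairs (u,v) of load u - load v
   (default 0 is harmless since the pair (u,u) gives 0) *)
Definition disc (x : V -> R) : R :=
  \big[Num.max/0]_(u : V) \big[Num.max/0]_(v : V) (x u - x v).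

(* One round of Algorithm 1 from loads x to loads y, where
   pr u = Some v : u proposes to v,
   ac v = Some w : v accepts the proposal of w. *)
Definition round (x : V -> R) (pr ac : V -> option V) (y : V -> R) : Prop :=
  (forall u, (exists v, e u v /\ x v < x u) <-> pr u <> None) /\
  (forall u v, pr u = Some v ->
     e u v /\ forall w, e u w -> x u - x w <= x u - x v) /\
  (forall v, (exists w, pr w = Some v) -> ac v <> None) /\
  (forall v w, ac v = Some w ->
     pr w = Some v /\
     forall w', pr w' = Some v -> (x w' - x v) / 2 <= (x w - x v) / 2) /\
  (forall u,
     y u = x u
           - (match pr u with
              | Some v => if ac v == Some u then (x u - x v) / 2 else 0
              | None => 0 end)
           + (match ac u with
              | Some w => (x w - x u) / 2
              | None => 0 end)).

(* an execution: loads x t at the start of round t, with the choices made *)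
Definition execution (x : nat -> V -> R) (pr ac : nat -> V -> option V) : Prop :=
  forall t, round (x t) (pr t) (ac t) (x t.+1).

Definition monotonic (x : nat -> V -> R) (pr ac : nat -> V -> option V) : Prop :=
  (forall t u v, pr t u = Some v -> ac t v = Some u -> x t v < x t u) /\
  (* (b) max load never increases: Lmax (x t.+1) <= Lmax (x t) *)
  (forall t w, exists u, x t.+1 w <= x t u) /\
  (* min load never decreases: Lmin (x t) <= Lmin (x t.+1) *)
  (forall t w, exists u, x t u <= x t.+1 w).

End Defs.

From HB Require Import structures.
From mathcomp Require Import all_boot all_order all_algebra.
From mathcomp Require Import all_classical all_reals all_analysis.
From mathcomp Require Import ring lra zify.
Import Order.TTheory GRing.Theory Num.Theory.
Local Open Scope ring_scope.
Set Implicit Arguments. Unset Strict Implicit. Unset Printing Implicit Defensive.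

(* Monotonicity is local: a proposal goes to a strictly less loaded neighbour,
   so every transfer goes downhill and every new load lies between two old
   ones ([round_new_load_bounded]).  Convergence uses the potential
   Phi = sum of squared deviations from the average load.  In one round
   - the load is conserved and sum x^2 drops by at least 2 E, where E is the
     sum of the squared received amounts ([round_sq_drop]);
   - along a shortest path (length k <= D) from a maximum to a minimum node,
     each edge gap is at most twice the inflow at the proposal target of its
     tail, and each node is the target of at most 3 path nodes; by
     Cauchy-Schwarz K^2 <= 12 D E ([shortest_gap_sq_le]);
   - since 4 Phi <= n K^2, Phi shrinks by the factor 1 - 1/(2nD+1)
     ([potential_contraction]).
   Iterating gives Phi_t <= Phi_0 exp(-t/(2nD+1)) ([potential_decay]), and
   K_t^2 <= 2 Phi_t turns this into the stated round bound. *)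

Lemma sum_single (R : realType) (V : finType) (F : V -> R) (v0 : V) :
  (forall v, v != v0 -> F v = 0) -> \sum_v F v = F v0.
Proof. by move=> F0; rewrite (bigD1 v0) //= big1 ?addr0 // => v /F0. Qed.

Section OneRound.
Variables (R : realType) (V : finType) (e : rel V).
Variables (x : V -> R) (pr ac : V -> option V) (y : V -> R).
Hypothesis Hround : round e x pr ac y.

Lemma pr_edge u v : pr u = Some v -> e u v.
Proof. by case: Hround => _ [Hpr _] /Hpr []. Qed.

Lemma pr_descends u v : pr u = Some v -> x v < x u.
Proof.
case: Hround => Hex [Hpr _] Euv.
have [w [euw ltwu]] : exists w, e u w /\ x w < x u by apply/Hex; rewrite Euv.
have := (Hpr u v Euv).2 w euw; lra.
Qed.

Lemma ac_proposed v w : ac v = Some w -> pr w = Some v.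
Proof. by case: Hround => _ [_ [_ [Hac _]]] /Hac []. Qed.

Lemma ac_ascends v w : ac v = Some w -> x v < x w.
Proof. by move=> /ac_proposed /pr_descends. Qed.

Definition transfer (u v : V) : R :=
  if (pr u == Some v) && (ac v == Some u) then (x u - x v) / 2 else 0.

Definition outflow (u : V) : R :=
  match pr u with
  | Some v => if ac v == Some u then (x u - x v) / 2 else 0
  | None => 0 end.
Definition inflow (u : V) : R :=
  match ac u with Some w => (x w - x u) / 2 | None => 0 end.

Lemma transfer_gap u v : transfer u v * (x u - x v) = 2 * transfer u v ^+ 2.
Proof. by rewrite /transfer; case: ifP => _; [field | rewrite mul0r expr0n mulr0]. Qed.

Lemma outflow_ge0 u : 0 <= outflow u.
Proof.
rewrite /outflow; case Euv: (pr u) => [v|] //.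
by case: ifP => // _; have := pr_descends Euv; lra.
Qed.

Lemma inflow_ge0 u : 0 <= inflow u.
Proof. by rewrite /inflow; case Evw: (ac u) => [w|] //; have := ac_ascends Evw; lra. Qed.

(* Each node sends to at most one node and receives from at most one node,
   so outflow/inflow and their squares are sums of transfers. *)
Lemma outflow_sum u :
  outflow u = \sum_v transfer u v /\ outflow u ^+ 2 = \sum_v transfer u v ^+ 2.
Proof.
rewrite /outflow; case Euv: (pr u) => [v0|]; last first.
  by split; rewrite big1 ?expr0n // => v _; rewrite /transfer Euv ?expr0n.
have T0 v : v != v0 -> transfer u v = 0.
  by move=> nv; rewrite /transfer Euv; case: eqP => // -[Ev]; rewrite Ev eqxx in nv.
rewrite (sum_single T0) (@sum_single _ _ (fun v => transfer u v ^+ 2) v0).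
  by rewrite /transfer Euv eqxx.
by move=> v /T0 ->; rewrite expr0n.
Qed.

Lemma inflow_sum v :
  inflow v = \sum_u transfer u v /\ inflow v ^+ 2 = \sum_u transfer u v ^+ 2.
Proof.
rewrite /inflow; case Evw: (ac v) => [w|]; last first.
  by split; rewrite big1 ?expr0n // => u _; rewrite /transfer Evw andbF ?expr0n.
have T0 u : u != w -> transfer u v = 0.
  move=> nu; rewrite /transfer Evw.
  suff -> : (Some w == Some u) = false by rewrite andbF.
  by apply/eqP => -[Eu]; rewrite Eu eqxx in nu.
rewrite (sum_single T0) (@sum_single _ _ (fun u => transfer u v ^+ 2) w).
  by rewrite /transfer Evw (ac_proposed Evw) !eqxx.
by move=> u /T0 ->; rewrite expr0n.
Qed.

Lemma round_load u : y u = x u - outflow u + inflow u.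
Proof. by case: Hround => _ [_ [_ [_ ->]]]. Qed.

Lemma round_new_load_bounded w : (exists u, y w <= x u) /\ (exists u, x u <= y w).
Proof.
rewrite round_load; split.
  exists (if ac w is Some w' then w' else w).
  have := outflow_ge0 w; rewrite /inflow; case Ew: (ac w) => [w'|] ?; last lra.
  by have := ac_ascends Ew; lra.
exists (if pr w is Some v then v else w).
have := inflow_ge0 w; rewrite /outflow; case Ew: (pr w) => [v|] ?; last lra.
by have := pr_descends Ew; case: ifP => _; lra.
Qed.

Lemma round_conserves : \sum_u y u = \sum_u x u.
Proof.
under eq_bigr do rewrite round_load.
rewrite !big_split /= sumrN.
suff -> : \sum_u outflow u = \sum_u inflow u by rewrite addrNK.
under eq_bigr do rewrite (outflow_sum _).1.
by rewrite exchange_big; apply: eq_bigr => v _; rewrite (inflow_sum v).1.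
Qed.

Lemma round_sq_drop : 2 * \sum_v inflow v ^+ 2 <= \sum_u x u ^+ 2 - \sum_u y u ^+ 2.
Proof.
set S := \sum_u \sum_v transfer u v ^+ 2.
have in_S : \sum_v inflow v ^+ 2 = S.
  by under eq_bigr do rewrite (inflow_sum _).2; rewrite exchange_big.
have out_S : \sum_u outflow u ^+ 2 = S.
  by under eq_bigr do rewrite (outflow_sum _).2.
have work_S : \sum_u x u * (outflow u - inflow u) = 2 * S.
  transitivity (\sum_u \sum_v transfer u v * (x u - x v)).
    under eq_bigr do rewrite mulrBr.
    rewrite sumrB.
    under eq_bigr do rewrite (outflow_sum _).1 mulr_sumr.
    under [X in _ - X = _]eq_bigr do rewrite (inflow_sum _).1 mulr_sumr.
    rewrite [X in _ - X]exchange_big /= -sumrB.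
    by apply: eq_bigr => u _; rewrite -sumrB; apply: eq_bigr => v _; ring.
  rewrite /S mulr_sumr; apply: eq_bigr => u _; rewrite mulr_sumr.
  by apply: eq_bigr => v _; rewrite transfer_gap.
have net_sq : \sum_u (outflow u - inflow u) ^+ 2
              <= \sum_u outflow u ^+ 2 + \sum_u inflow u ^+ 2.
  rewrite -big_split; apply: ler_sum => u _ /=.
  by have := outflow_ge0 u; have := inflow_ge0 u; nra.
have -> : \sum_u x u ^+ 2 - \sum_u y u ^+ 2 =
   2 * \sum_u x u * (outflow u - inflow u) - \sum_u (outflow u - inflow u) ^+ 2.
  by rewrite -sumrB mulr_sumr -sumrB; apply: eq_bigr => u _; rewrite round_load; ring.
lra.
Qed.

Definition target_inflow (u : V) : R :=
  if pr u is Some v then inflow v else 0.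

Lemma target_inflow_ge0 u : 0 <= target_inflow u.
Proof. by rewrite /target_inflow; case: (pr u) => // v; apply: inflow_ge0. Qed.

(* Across any edge u -- u', the load gap is at most twice the inflow at the
   target of u: that target accepted a proposal at least as large as u's,
   and u's proposal is at least as large as the gap to u'. *)
Lemma edge_gap_le_target_inflow u u' : e u u' -> x u - x u' <= 2 * target_inflow u.
Proof.
move=> euu'; case: Hround => Hex [Hpr [Hrecv [Hac _]]].
rewrite /target_inflow; case Euv: (pr u) => [v|]; last first.
  case: (ltrP (x u') (x u)) => // ltu'u; last lra.
  by exfalso; apply: (Hex u).1; [exists u' | rewrite Euv].
case Evw: (ac v) => [w|]; last by exfalso; apply: (Hrecv v); [exists u|].
have := (Hac v w Evw).2 u Euv; have := (Hpr u v Euv).2 u' euu'.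
rewrite /inflow Evw; lra.
Qed.

End OneRound.

Section Potential.
Variables (R : realType) (V : finType).
Implicit Types x : V -> R.

Lemma disc_ge x u v : x u - x v <= disc x.
Proof.
rewrite /disc (bigD1 u) //= le_max; apply/orP; left.
by rewrite (bigD1 v) //= le_max lexx.
Qed.

Lemma extremal_nodes x (i0 : V) :
  exists a b, (forall u, x u <= x a) /\ (forall u, x b <= x u).
Proof.
have [a _ Ha] := @arg_maxP _ R V i0 xpredT x isT.
have [b _ Hb] := @arg_minP _ R V i0 xpredT x isT.
by exists a, b; split=> u; [apply: Ha | apply: Hb].
Qed.

Lemma disc_extremal x a b : (forall u, x u <= x a) -> (forall u, x b <= x u) ->
  disc x = x a - x b.
Proof.
move=> Ha Hb; apply/le_anti; rewrite disc_ge andbT /disc.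
have gap_ub u v : x u - x v <= x a - x b by have := Ha u; have := Hb v; lra.
have gap0 : 0 <= x a - x b by rewrite subr_ge0.
apply: (big_ind (fun m => m <= x a - x b)) => // [p q hp hq|u _].
  by rewrite ge_max hp hq.
apply: (big_ind (fun m => m <= x a - x b)) => // p q hp hq.
by rewrite ge_max hp hq.
Qed.

(* The potential: the sum of squared deviations from the average load. *)
Definition potential x := \sum_u x u ^+ 2 - (\sum_u x u) ^+ 2 / #|V|%:R.

Lemma sum_sq_shift x c : \sum_u (x u - c) ^+ 2 =
  \sum_u x u ^+ 2 - 2 * c * \sum_u x u + #|V|%:R * c ^+ 2.
Proof.
transitivity (\sum_u (x u ^+ 2 - 2 * c * x u + c ^+ 2)).
  by apply: eq_bigr => u _; ring.
by rewrite big_split sumrB /= -mulr_sumr sumr_const [#|V|%:R * _]mulr_natl.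
Qed.

Lemma potential_mean x : (0 < #|V|)%N ->
  potential x = \sum_u (x u - (\sum_v x v) / #|V|%:R) ^+ 2.
Proof.
move=> n0; have nz : #|V|%:R != 0 :> R by rewrite pnatr_eq0 -lt0n.
by rewrite sum_sq_shift /potential; field.
Qed.

Lemma potential_ge0 x : (0 < #|V|)%N -> 0 <= potential x.
Proof. by move=> n0; rewrite potential_mean // sumr_ge0 // => u _; rewrite sqr_ge0. Qed.

Lemma potential_le_sum_sq x c : (0 < #|V|)%N -> potential x <= \sum_u (x u - c) ^+ 2.
Proof.
move=> n0; have n_gt0 : 0 < #|V|%:R :> R by rewrite ltr0n.
rewrite sum_sq_shift /potential; set S := \sum_u x u; set n := #|V|%:R.
have sq_ge0 : 0 <= (S - n * c) ^+ 2 / n by rewrite divr_ge0 ?sqr_ge0 ?ltW.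
have -> : S ^+ 2 / n = (S - n * c) ^+ 2 / n + 2 * c * S - n * c ^+ 2.
  by field; rewrite gt_eqF.
lra.
Qed.

(* Upper bound: 4 potential <= n K^2, comparing with the midrange. *)
Lemma potential_le_disc x : (0 < #|V|)%N -> 4 * potential x <= #|V|%:R * disc x ^+ 2.
Proof.
move=> n0; have [i0 _] : exists i, i \in V by apply/card_gt0P.
have [a [b [Ha Hb]]] := extremal_nodes x i0; rewrite (disc_extremal Ha Hb).
have := potential_le_sum_sq x ((x a + x b) / 2) n0.
have : \sum_u (x u - (x a + x b) / 2) ^+ 2 <= \sum_(u : V) (x a - x b) ^+ 2 / 4.
  by apply: ler_sum => u _; have := Ha u; have := Hb u; nra.
rewrite sumr_const -mulr_natl; lra.
Qed.

(* Lower bound: two distinct nodes alone contribute half their squared gap. *)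
Lemma gap_sq_le_potential x a b : (0 < #|V|)%N -> a != b ->
  (x a - x b) ^+ 2 <= 2 * potential x.
Proof.
move=> n0 ab; rewrite potential_mean //; set m := _ / _.
rewrite (bigD1 a) //= (bigD1 b) 1?eq_sym //=.
have : 0 <= \sum_(i | (i != a) && (i != b)) (x i - m) ^+ 2.
  by rewrite sumr_ge0 // => u _; rewrite sqr_ge0.
have := sqr_ge0 (x a - m + (x b - m)); nra.
Qed.

Lemma disc_sq_le_potential x : (0 < #|V|)%N -> disc x ^+ 2 <= 2 * potential x.
Proof.
move=> n0; have [i0 _] : exists i, i \in V by apply/card_gt0P.
have [a [b [Ha Hb]]] := extremal_nodes x i0; rewrite (disc_extremal Ha Hb).
have [<-|ab] := eqVneq a b; last exact: gap_sq_le_potential.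
by rewrite subrr expr0n /= mulr_ge0 ?potential_ge0.
Qed.

End Potential.

Lemma last_take (T : Type) (x : T) (s : seq T) i : (i <= size s)%N ->
  last x (take i s) = nth x (x :: s) i.
Proof.
move=> hi; rewrite (last_nth x) size_takel //.
by case: i hi => [|i] hi //=; rewrite nth_take.
Qed.

Section Paths.
Variables (V : finType) (e : rel V).

Definition shortest (a : V) (p : seq V) : Prop :=
  forall p', path e a p' -> last a p' = last a p -> (size p <= size p')%N.

Lemma shortest_path a b D : dist_le e a b D ->
  exists p, [/\ path e a p, last a p = b, (size p <= D)%N & shortest a p].
Proof.
elim: D => [|D IH] [p /and3P [hp /eqP hl hs]].
  exists p; split=> // p' _ _; move: hs; rewrite leqn0 => /eqP ->; exact: leq0n.
have [/IH [q [hq hql hqs qmin]]|none_le_D] := boolp.EM (dist_le e a b D).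
  by exists q; split=> //; apply: leqW.
exists p; split=> // p' hp' hl'; rewrite leqNgt; apply/negP => lt.
by apply: none_le_D; exists p'; rewrite hp' hl' hl eqxx /=; lia.
Qed.

Lemma path_shortcut a p v i j :
  symmetric e -> path e a p -> (i + 3 <= j)%N -> (j <= size p)%N ->
  e (nth a (a :: p) i) v -> e (nth a (a :: p) j) v ->
  exists p', [/\ path e a p', last a p' = last a p & (size p' < size p)%N].
Proof.
move=> sym hp hij hj ei ej; have hi : (i <= size p)%N by lia.
exists (take i p ++ v :: nth a (a :: p) j :: drop j p); split.
- rewrite cat_path last_take //= ei (sym v) ej /=.
  have := hp; rewrite -{1}(cat_take_drop i p) cat_path => /andP [-> _].
  by move: hp; rewrite -{1}(cat_take_drop j p) cat_path last_take // => /andP [_].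
- by rewrite last_cat /= -(last_take a hj) -last_cat cat_take_drop.
- by rewrite size_cat /= size_takel // size_drop; lia.
Qed.

Lemma shortest_common_neighbour a p v i j :
  symmetric e -> path e a p -> shortest a p -> (j <= size p)%N ->
  e (nth a (a :: p) i) v -> e (nth a (a :: p) j) v -> (j < i + 3)%N.
Proof.
move=> sym hp pmin hj ei ej; rewrite ltnNge; apply/negP => hij.
have [p' [hp' hl' lt]] := path_shortcut sym hp hij hj ei ej.
by have := pmin p' hp' hl'; rewrite leqNgt lt.
Qed.

End Paths.

Lemma count_clustered (Q : pred nat) k :
  (forall i j, (i + 3 <= j)%N -> (j < k)%N -> Q i -> Q j -> False) ->
  (count Q (iota 0 k) <= 3)%N.
Proof.
move=> far; rewrite -size_filter.
have sorted_Q : sorted ltn [seq i <- iota 0 k | Q i].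
  by apply: sorted_filter; [exact: ltn_trans | exact: iota_ltn_sorted].
have mem_Q z : z \in [seq i <- iota 0 k | Q i] -> Q z /\ (z < k)%N.
  by rewrite mem_filter mem_iota add0n => /andP [-> /andP [_ ->]].
move: sorted_Q mem_Q; case: [seq i <- iota 0 k | Q i] => [|s0 [|s1 [|s2 [|s3 r]]]] //=.
move=> /and4P [l01 l12 l23 _] mem_Q.
have [q0 _] := mem_Q s0 (mem_head _ _).
have [q3 h3] : Q s3 /\ (s3 < k)%N by apply: mem_Q; rewrite !inE eqxx !orbT.
by exfalso; apply: (far s0 s3) => //; lia.
Qed.

Lemma sum_sq_le (R : realType) (c : nat -> R) k :
  (\sum_(0 <= i < k) c i) ^+ 2 <= k%:R * \sum_(0 <= i < k) c i ^+ 2.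
Proof.
have : 0 <= \sum_(0 <= i < k) \sum_(0 <= j < k) (c i - c j) ^+ 2.
  by apply: sumr_ge0 => i _; apply: sumr_ge0 => j _; rewrite sqr_ge0.
suff -> : \sum_(0 <= i < k) \sum_(0 <= j < k) (c i - c j) ^+ 2 =
   2 * (k%:R * \sum_(0 <= i < k) c i ^+ 2) - 2 * (\sum_(0 <= i < k) c i) ^+ 2 by lra.
transitivity (\sum_(0 <= i < k) (k%:R * c i ^+ 2 + \sum_(0 <= j < k) c j ^+ 2
                                 - 2 * c i * \sum_(0 <= j < k) c j)).
  apply: eq_bigr => i _.
  transitivity (\sum_(0 <= j < k) (c i ^+ 2 + c j ^+ 2 - 2 * c i * c j)).
    by apply: eq_bigr => j _; ring.
  rewrite sumrB big_split /= sumr_const_nat subn0 -mulr_sumr.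
  by rewrite -[c i ^+ 2 *+ k]mulr_natl.
rewrite sumrB big_split /= -!mulr_sumr sumr_const_nat subn0 -mulr_suml.
by rewrite -[_ *+ k]mulr_natl -mulr_sumr; ring.
Qed.

Section Contraction.
Variables (R : realType) (V : finType) (e : rel V).
Variables (x : V -> R) (pr ac : V -> option V) (y : V -> R).
Hypothesis Hround : round e x pr ac y.
Hypothesis sym_e : symmetric e.

Lemma target_inflow_energy (s : nat -> V) k m :
  (forall v, count (fun i => pr (s i) == Some v) (iota 0 k) <= m)%N ->
  \sum_(0 <= i < k) target_inflow x pr ac (s i) ^+ 2
    <= m%:R * \sum_v inflow x ac v ^+ 2.
Proof.
move=> few_targets.
have -> : \sum_(0 <= i < k) target_inflow x pr ac (s i) ^+ 2 =
    \sum_v \sum_(0 <= i < k) (pr (s i) == Some v)%:R * inflow x ac v ^+ 2.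
  rewrite exchange_big /=; apply: eq_bigr => i _.
  rewrite /target_inflow; case: (pr (s i)) => [v0|]; last first.
    by rewrite big1 ?expr0n // => v _; rewrite mul0r.
  rewrite (@sum_single _ _ _ v0) ?eqxx ?mul1r // => v nv.
  suff -> : (Some v0 == Some v) = false by rewrite mul0r.
  by apply/eqP => -[Ev]; rewrite Ev eqxx in nv.
rewrite mulr_sumr; apply: ler_sum => v _; rewrite -mulr_suml.
apply: ler_wpM2r; first exact: sqr_ge0.
have -> : \sum_(0 <= i < k) ((pr (s i) == Some v)%:R : R) =
          (count (fun i => pr (s i) == Some v) (iota 0 k))%:R.
  rewrite -natr_sum /index_iota subn0 -sum1_count [X in _ = X%:R]big_mkcond /=.
  by congr (_ %:R); apply: eq_bigr => i _; case: (pr (s i) == Some v).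
by rewrite ler_nat.
Qed.

(* Telescoping along a path and bounding each edge gap by its target inflow. *)
Lemma path_gap_le a p : path e a p ->
  x a - x (last a p) <= 2 * \sum_(0 <= i < size p) target_inflow x pr ac (nth a (a :: p) i).
Proof.
move=> hp; set u := fun i => nth a (a :: p) i.
have -> : x a - x (last a p) = \sum_(0 <= i < size p) (x (u i) - x (u i.+1)).
  have tel := telescope_sumr (fun i => x (u i)) (leq0n (size p)).
  transitivity (- \sum_(0 <= i < size p) (x (u i.+1) - x (u i))).
    by rewrite tel (last_nth a) /u /=; ring.
  by rewrite -sumrN; apply: eq_bigr => i _; rewrite opprB.
rewrite mulr_sumr; apply: ler_sum_nat => i /andP [_ hi].
exact/(edge_gap_le_target_inflow Hround)/(pathP a hp).
Qed.

(* Along a shortest path of length k, the squared end-to-end load drop is at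
   most 12 k times the energy received in the round (Cauchy-Schwarz plus the
   fact that each node is targeted from at most 3 path nodes). *)
Lemma shortest_gap_sq_le a p : path e a p -> shortest e a p -> x (last a p) <= x a ->
  (x a - x (last a p)) ^+ 2 <= 12 * (size p)%:R * \sum_v inflow x ac v ^+ 2.
Proof.
move=> hp pmin drop_ge0; set u := fun i => nth a (a :: p) i.
set c := fun i => target_inflow x pr ac (u i).
have few_targets v : (count (fun i => pr (u i) == Some v) (iota 0 (size p)) <= 3)%N.
  apply: count_clustered => i j hij hj /eqP /(pr_edge Hround) ei /eqP /(pr_edge Hround) ej.
  by have := shortest_common_neighbour sym_e hp pmin (ltnW hj) ei ej; lia.
have energy := target_inflow_energy few_targets.
have gap := path_gap_le hp; have cs := sum_sq_le c (size p).
have c_ge0 : 0 <= \sum_(0 <= i < size p) c i.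
  by apply: sumr_ge0 => i _; exact: (target_inflow_ge0 Hround).
have : (x a - x (last a p)) ^+ 2 <= 4 * (\sum_(0 <= i < size p) c i) ^+ 2.
  by nra.
have : 0 <= (size p)%:R :> R by [].
nra.
Qed.

(* One round shrinks the potential by the factor 1 - 1/(2nD+1): the potential
   is at most n K^2/4, K^2 is at most 12 D times the received energy, and the
   potential drops by at least twice that energy. *)
Lemma potential_contraction D : (0 < #|V|)%N -> (forall u v, dist_le e u v D) ->
  potential y <= (1 - ((2 * #|V| * D + 1)%:R)^-1) * potential x.
Proof.
move=> n0 diamD; have [i0 _] : exists i, i \in V by apply/card_gt0P.
have [a [b [Ha Hb]]] := extremal_nodes x i0.
have [p [hp pb hpD pmin]] := shortest_path (diamD a b); subst b.
have K_sq := shortest_gap_sq_le hp pmin (Hb a).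
have pot_K := potential_le_disc x n0; rewrite (disc_extremal Ha Hb) in pot_K.
have drop := round_sq_drop Hround.
have -> : potential y = potential x - (\sum_u x u ^+ 2 - \sum_u y u ^+ 2).
  by rewrite /potential (round_conserves Hround); ring.
have px0 := potential_ge0 x n0.
set E := \sum_v inflow x ac v ^+ 2 in K_sq drop.
set d := \sum_u x u ^+ 2 - \sum_u y u ^+ 2 in drop *.
set K2 := (x a - x (last a p)) ^+ 2 in K_sq pot_K.
set n := #|V|%:R in pot_K.
have E0 : 0 <= E by apply: sumr_ge0 => v _; exact: sqr_ge0.
have kD : (size p)%:R <= D%:R :> R by rewrite ler_nat.
have nD0 : 0 <= n * D%:R by rewrite mulr_ge0.
have nK2 : n * K2 <= n * (12 * D%:R * E).
  by apply: ler_wpM2l => //; apply: (le_trans K_sq); apply: ler_wpM2r => //; lra.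
have nDE : n * D%:R * (2 * E) <= n * D%:R * d by apply: ler_wpM2l.
have nDE_eq : n * (12 * D%:R * E) = 6 * (n * D%:R * (2 * E)) by ring.
have pot_d : 2 * potential x <= 3 * (n * D%:R) * d by lra.
have -> : (2 * #|V| * D + 1)%:R = 2 * (n * D%:R) + 1 :> R.
  by rewrite natrD !natrM mulrA.
set N := 2 * (n * D%:R) + 1.
have N0 : 0 < N by rewrite /N; lra.
have nDd : 0 <= n * D%:R * d by rewrite mulr_ge0 //; lra.
by rewrite mulrBl mul1r lerD2l lerN2 mulrC ler_pdivrMr // /N; lra.
Qed.

End Contraction.

Lemma expR_time_bound (R : realType) (c N t : R) : 0 < c -> 0 < N ->
  c * ln N <= t -> expR (- (t / c)) <= N^-1.
Proof.
move=> c0 N0 ct; rewrite -[N](lnK (N0 : N \in Num.pos)) -expRN ler_expR lerN2.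
by rewrite ler_pdivlMr // mulrC.
Qed.

Section Executions.
Variables (R : realType) (V : finType) (e : rel V).
Variables (x : nat -> V -> R) (pr ac : nat -> V -> option V).
Hypothesis Hexec : execution e x pr ac.

Lemma execution_monotonic : monotonic x pr ac.
Proof.
split; [|split] => t.
- by move=> u v /(pr_descends (Hexec t)).
- by move=> w; have [] := round_new_load_bounded (Hexec t) w.
- by move=> w; have [] := round_new_load_bounded (Hexec t) w.
Qed.

(* Iterating the contraction, using 1 - 1/N <= exp (-1/N). *)
Lemma potential_decay D : symmetric e -> (0 < #|V|)%N ->
  (forall u v, dist_le e u v D) -> forall s,
  potential (x s) <= potential (x 0%N) * expR (- (s%:R / (2 * #|V| * D + 1)%:R)).
Proof.
move=> sym_e n0 diamD; set N := ((2 * #|V| * D + 1)%:R : R).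
have N_ge1 : 1 <= N by rewrite /N ler1n addn1.
have inv_le1 : N^-1 <= 1 by rewrite invf_le1 // (lt_le_trans ltr01).
have one_sub_le_exp : 1 - N^-1 <= expR (- N^-1) by have := expR_ge1Dx (- N^-1); lra.
elim=> [|s IH]; first by rewrite mul0r oppr0 expR0 mulr1.
have -> : expR (- (s.+1%:R / N)) = expR (- N^-1) * expR (- (s%:R / N)).
  by rewrite -expRD -addn1 natrD mulrDl mul1r opprD addrC.
apply: (le_trans (potential_contraction (Hexec s) sym_e n0 diamD)).
rewrite mulrCA; apply: ler_pM => //; last exact: potential_ge0.
by rewrite subr_ge0.
Qed.

Lemma potential_after_rounds D N t : symmetric e -> (0 < #|V|)%N ->
  (forall u v, dist_le e u v D) -> 0 < N ->
  (2 * #|V| * D + 1)%:R * ln N <= t%:R -> potential (x t) * N <= potential (x 0%N).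
Proof.
move=> sym_e n0 diamD N_gt0 time.
have exp_le : expR (- (t%:R / (2 * #|V| * D + 1)%:R)) <= N^-1.
  by apply: expR_time_bound; rewrite // ltr0n addn1.
rewrite -ler_pdivlMr //; apply: (le_trans (potential_decay sym_e n0 diamD t)).
by apply: ler_wpM2l; [exact: potential_ge0 | exact: exp_le].
Qed.

End Executions.

Unset Implicit Arguments.

Theorem theorem1 (R : realType) (V : finType) (e : rel V) :
  symmetric e -> irreflexive e -> (forall u v : V, connect e u v) ->
  (forall (x : nat -> V -> R) (pr ac : nat -> V -> option V),
     (forall v, 0 <= x 0%N v) -> execution e x pr ac -> monotonic x pr ac) /\
  (forall (D : nat) (x : nat -> V -> R) (pr ac : nat -> V -> option V) (eps : R),
     (2 <= #|V|)%N -> is_diameter e D ->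
     (forall v, 0 <= x 0%N v) -> 0 < disc (x 0%N) -> 0 < eps ->
     execution e x pr ac ->
     forall t : nat,
       (2 * #|V| * D + 1)%:R *
         @ln R ((Num.ceil (2 * #|V|%:R * disc (x 0%N) ^+ 2 / eps ^+ 2))%:~R : R)
         <= t%:R ->
       disc (x t) <= eps).
Proof.
move=> sym_e _ _; split=> [x pr ac _ Hexec|D x pr ac eps n2 [diamD _] _ K0 eps0 Hexec t].
  exact: execution_monotonic.
have n0 : (0 < #|V|)%N by lia.
set K := disc (x 0%N); set n := (#|V|%:R : R); set Z := 2 * n * K ^+ 2 / eps ^+ 2.
have n_gt0 : 0 < n by rewrite ltr0n.
have Z_gt0 : 0 < Z by rewrite divr_gt0 ?mulr_gt0 ?exprn_gt0.
have Z_le_N : Z <= (Num.ceil Z)%:~R by exact: ceil_ge.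
move: (Num.ceil Z)%:~R Z_le_N => N Z_le_N time.
have N_gt0 : 0 < N := lt_le_trans Z_gt0 Z_le_N.
have pot_t := potential_after_rounds Hexec sym_e n0 diamD N_gt0 time.
have pot_0 := potential_le_disc (x 0%N) n0; rewrite -/n -/K in pot_0.
have nK : n * K ^+ 2 = Z * eps ^+ 2 / 2 by rewrite /Z; field; rewrite gt_eqF ?exprn_gt0.
have disc_t := disc_sq_le_potential (x t) n0.
have pot_t_small : potential (x t) * 8 <= eps ^+ 2.
  have ZN : Z * eps ^+ 2 <= N * eps ^+ 2 by apply: ler_wpM2r; rewrite ?sqr_ge0.
  by rewrite -(ler_pM2l N_gt0); lra.
by nra.
Qed.
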